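(* Let $1\le M\le N$. There is a constant $c_M>0$ (depending only on $M$) such that the following holds for every complex $N\times M$ matrix $\mathbf{H}$ of full column rank. Let $d_{\mathbf{H}}$ be the minimum distance of the lattice $\{\mathbf{H}\mathbf{z}:\mathbf{z}\in\mathbb{Z}[i]^M\}$, let $\mathbf{B}=\mathbf{H}^{-\mathtt{H}}\mathbf{U}$ (with $\mathbf{U}$ unimodular) be an LLL-reduced basis of the lattice generated by $\mathbf{H}^{-\mathtt{H}}=\mathbf{H}(\mathbf{H}^{\mathtt{H}}\mathbf{H})^{-1}$, and let $\mathbf{y}=\mathbf{H}\mathbf{x}+\mathbf{w}$ with $\mathbf{x}\in\mathbb{Z}[i]^M$, $\mathbf{w}\in\mathbb{C}^N$. If $\|\mathbf{w}\|<c_M d_{\mathbf{H}}$, then the LLL-aided (type I) decoder correctly decodes, i.e. $\widehat{\mathbf{x}}=\mathbf{x}$.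
   Context: $(\cdot)^{\mathtt{H}}$ is the conjugate transpose; $\mathbb{Z}[i]$ is the ring of Gaussian integers; a unimodular matrix is a matrix with entries in $\mathbb{Z}[i]$ whose inverse also has entries in $\mathbb{Z}[i]$. The lattice generated by an $N\times M$ matrix $\mathbf{G}$ of full column rank is $\{\mathbf{G}\mathbf{z}:\mathbf{z}\in\mathbb{Z}[i]^M\}$; its minimum distance is the smallest norm of a nonzero lattice vector. A basis is LLL-reduced in the sense of the Lenstra–Lenstra–Lovász reduction (extended to complex lattices over $\mathbb{Z}[i]$): with Gram–Schmidt vectors $\mathbf{b}_k^*$ and coefficients $\mu_{k,j}=\langle\mathbf{b}_k,\mathbf{b}_j^*\rangle/\|\mathbf{b}_j^*\|^2$, one has $|\mathrm{Re}\,\mu_{k,j}|,|\mathrm{Im}\,\mu_{k,j}|\le 1/2$ for $j<k$ and $\|\mathbf{b}_k^*\|^2\ge(3/4-|\mu_{k,k-1}|^2)\|\mathbf{b}_{k-1}^*\|^2$. The LLL-aided (type I) decoder computes $\tilde{\mathbf{x}}$ as the closest point of $\mathbb{Z}[i]^M$ to $\mathbf{B}^{\mathtt{H}}\mathbf{y}$ and outputs $\widehat{\mathbf{x}}=\mathbf{U}^{-\mathtt{H}}\tilde{\mathbf{x}}$. *)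

From mathcomp Require Import all_boot all_order all_algebra reals complex.
Set Implicit Arguments. Unset Strict Implicit. Unset Printing Implicit Defensive.
Import Order.TTheory GRing.Theory Num.Theory.
Local Open Scope ring_scope.

Section Defs.
Variable R : realType.
Local Notation C := (R[i]).

Definition gauss_int (z : C) : Prop :=
  exists a b : int, z = Complex (a%:~R) (b%:~R).

Definition gauss_mx m n (A : 'M[C]_(m, n)) : Prop :=
  forall i j, gauss_int (A i j).

Definition ctrmx m n (A : 'M[C]_(m, n)) : 'M[C]_(n, m) := (map_mx (@conjc R) A)^T.

Definition unimodular n (U : 'M[C]_n) : Prop :=
  gauss_mx U /\ U \in unitmx /\ gauss_mx (invmx U).

(* Hermitian inner product <u, v> = v^H u  (linear in u) *)
Definition cdot n (u v : 'cV[C]_n) : C := \sum_i u i 0 * conjc (v i 0).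

Definition sqnorm n (v : 'cV[C]_n) : R :=
  \sum_i (complex.Re (v i 0) ^+ 2 + complex.Im (v i 0) ^+ 2).
Definition vnorm n (v : 'cV[C]_n) : R := Num.sqrt (sqnorm v).

Definition csq (z : C) : R := complex.Re z ^+ 2 + complex.Im z ^+ 2.

Definition is_min_dist N M (H : 'M[C]_(N, M)) (d : R) : Prop :=
  (exists z : 'cV[C]_M, gauss_mx z /\ z != 0 /\ vnorm (H *m z) = d) /\
  (forall z : 'cV[C]_M, gauss_mx z -> z != 0 -> d <= vnorm (H *m z)).

(* Gram-Schmidt orthogonalization of a sequence of vectors b_0, b_1, ... :
   b_k^* = b_k - \sum_{j<k} mu_{k,j} b_j^*,  mu_{k,j} = <b_k,b_j^*>/||b_j^*||^2 *)
Definition gs_coef n (u v : 'cV[C]_n) : C := cdot u v / cdot v v.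

Fixpoint gs_aux n (bs acc : seq 'cV[C]_n) : seq 'cV[C]_n :=
  match bs with
  | [::] => acc
  | b :: bs' =>
      gs_aux bs' (rcons acc (b - \sum_(j < size acc) gs_coef b acc`_j *: acc`_j))
  end.

Definition gso n (bs : seq 'cV[C]_n) : seq 'cV[C]_n := gs_aux bs [::].

Definition cols N M (B : 'M[C]_(N, M)) : seq 'cV[C]_N :=
  [seq col j B | j <- enum 'I_M].

Definition gs_vec N M (B : 'M[C]_(N, M)) (k : nat) : 'cV[C]_N := (gso (cols B))`_k.
Definition gs_mu N M (B : 'M[C]_(N, M)) (k j : nat) : C :=
  gs_coef (cols B)`_k (gs_vec B j).

(* LLL-reduced (complex LLL, delta = 3/4) *)
Definition LLL_reduced N M (B : 'M[C]_(N, M)) : Prop :=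
  (forall k j : nat, (j < k < M)%N ->
     `|complex.Re (gs_mu B k j)| <= 1/2 /\ `|complex.Im (gs_mu B k j)| <= 1/2) /\
  (forall k : nat, (1 <= k < M)%N ->
     sqnorm (gs_vec B k) >= (3/4 - csq (gs_mu B k k.-1)) * sqnorm (gs_vec B k.-1)).

Definition closest_gauss M (v t : 'cV[C]_M) : Prop :=
  gauss_mx t /\ forall z : 'cV[C]_M, gauss_mx z -> vnorm (v - t) <= vnorm (v - z).

End Defs.

From mathcomp Require Import all_boot all_order all_algebra reals complex.
From mathcomp Require Import ring lra.
Import Order.TTheory GRing.Theory Num.Theory.
Local Open Scope complex_scope.
Local Open Scope ring_scope.
Set Implicit Arguments. Unset Strict Implicit. Unset Printing Implicit Defensive.

(* The decisive quantity is the length of the last Gram-Schmidt vector b*_M of the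
   LLL-reduced dual basis B = H^{-H} U.  The Gaussian-integer vector z = U^{-H} e_M
   gives a lattice point H z with <H z, b_j> = [j = M]; it is orthogonal to
   b*_1, ..., b*_{M-1}, which forces ||b*_M|| ||H z|| = 1, hence ||b*_M|| <= 1 / d_H.
   The Lovasz condition propagates this to ||b*_k||^2 <= 4^(M-1) / d_H^2 for all k.
   The decoder sees B^H y = U^H x + B^H w.  Writing b_k = b*_k + sum_j mu_kj b*_j with
   size-reduced mu_kj, every coordinate of B^H w has real and imaginary parts of
   size at most k max_j |<w, b*_j>|, which is at most 1/4 once ||w|| < c_M d_H.
   Rounding a perturbation of a Gaussian-integer point whose parts are below 1/2
   gives back that point, so x~ = U^H x and x^ = x. *)

Section LLLDecoding.
Variable R : realType.
Local Notation C := R[i].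

Lemma mulcJ_csq (z : C) : z * z^*%C = (csq z)%:C.
Proof.
case: z => a b; apply/eqP; rewrite eq_complex /csq /=.
by apply/andP; split; apply/eqP; ring.
Qed.

Lemma csq_ge0 (z : C) : 0 <= csq z.
Proof. by rewrite addr_ge0 ?sqr_ge0. Qed.

Lemma csq_eq0 (z : C) : csq z = 0 -> z = 0.
Proof.
case: z => a b; rewrite /csq /= => /eqP; rewrite paddr_eq0 ?sqr_ge0 //.
by rewrite !sqrf_eq0 => /andP[/eqP-> /eqP->].
Qed.

Lemma sqnorm_ge0 n (v : 'cV[C]_n) : 0 <= sqnorm v.
Proof. exact/sumr_ge0/(fun i _ => csq_ge0 (v i 0)). Qed.

Lemma sqnorm_eq0 n (v : 'cV[C]_n) : sqnorm v = 0 -> v = 0.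
Proof.
move=> v0; apply/matrixP => i j; rewrite ord1 mxE; apply: csq_eq0.
exact: (psumr_eq0P (fun i _ => csq_ge0 (v i 0)) v0).
Qed.

Lemma sqr_vnorm n (v : 'cV[C]_n) : vnorm v ^+ 2 = sqnorm v.
Proof. by rewrite sqr_sqrtr ?sqnorm_ge0. Qed.

Lemma cdotC n (u v : 'cV[C]_n) : cdot v u = (cdot u v)^*%C.
Proof.
rewrite /cdot rmorph_sum; apply: eq_bigr => i _.
by rewrite rmorphM /= conjcK mulrC.
Qed.

Lemma cdotDl n (u v w : 'cV[C]_n) : cdot (u + v) w = cdot u w + cdot v w.
Proof. by rewrite /cdot -big_split; apply: eq_bigr => i _; rewrite mxE mulrDl. Qed.

Lemma cdotZl n a (u w : 'cV[C]_n) : cdot (a *: u) w = a * cdot u w.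
Proof. by rewrite /cdot mulr_sumr; apply: eq_bigr => i _; rewrite mxE mulrA. Qed.

Lemma cdot0l n (w : 'cV[C]_n) : cdot 0 w = 0.
Proof. by rewrite -(scale0r 0) cdotZl mul0r. Qed.

Lemma cdotBl n (u v w : 'cV[C]_n) : cdot (u - v) w = cdot u w - cdot v w.
Proof. by rewrite cdotDl -scaleN1r cdotZl mulN1r. Qed.

Lemma cdot_suml n (I : finType) (P : pred I) (F : I -> 'cV[C]_n) w :
  cdot (\sum_(i | P i) F i) w = \sum_(i | P i) cdot (F i) w.
Proof. exact: (big_morph _ (fun u v => cdotDl u v w) (cdot0l w)). Qed.

Lemma cdotDr n (u v w : 'cV[C]_n) : cdot w (u + v) = cdot w u + cdot w v.
Proof. by rewrite cdotC cdotDl rmorphD /= -!cdotC. Qed.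

Lemma cdotZr n a (u w : 'cV[C]_n) : cdot w (a *: u) = a^*%C * cdot w u.
Proof. by rewrite cdotC cdotZl rmorphM /= -cdotC. Qed.

Lemma cdotBr n (u v w : 'cV[C]_n) : cdot w (u - v) = cdot w u - cdot w v.
Proof. by rewrite cdotC cdotBl rmorphB /= -!cdotC. Qed.

Lemma cdot0r n (w : 'cV[C]_n) : cdot w 0 = 0.
Proof. by rewrite cdotC cdot0l rmorph0. Qed.

Lemma cdot_sumr n (I : finType) (P : pred I) (F : I -> 'cV[C]_n) w :
  cdot w (\sum_(i | P i) F i) = \sum_(i | P i) cdot w (F i).
Proof.
by rewrite cdotC cdot_suml rmorph_sum /=; apply: eq_bigr => i _; rewrite -cdotC.
Qed.

Lemma cdotii n (v : 'cV[C]_n) : cdot v v = (sqnorm v)%:C.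
Proof. by rewrite /cdot /sqnorm rmorph_sum; apply: eq_bigr => i _; apply: mulcJ_csq. Qed.

Lemma cdotii_eq0 n (v : 'cV[C]_n) : cdot v v = 0 -> v = 0.
Proof. by rewrite cdotii => -[/sqnorm_eq0]. Qed.

Lemma gauss_int0 : gauss_int (0 : C).
Proof. by exists 0, 0. Qed.

Lemma gauss_intD (x y : C) : gauss_int x -> gauss_int y -> gauss_int (x + y).
Proof. by move=> [a [b ->]] [c [e ->]]; exists (a + c), (b + e); rewrite !intrD. Qed.

Lemma gauss_intN (x : C) : gauss_int x -> gauss_int (- x).
Proof. by move=> [a [b ->]]; exists (- a), (- b); rewrite !intrN. Qed.

Lemma gauss_intM (x y : C) : gauss_int x -> gauss_int y -> gauss_int (x * y).
Proof.
move=> [a [b ->]] [c [e ->]]; exists (a * c - b * e), (a * e + b * c).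
by rewrite !intrD !intrN !intrM.
Qed.

Lemma gauss_intJ (x : C) : gauss_int x -> gauss_int x^*%C.
Proof. by move=> [a [b ->]]; exists a, (- b); rewrite intrN. Qed.

Lemma gauss_mxM m n p (A : 'M[C]_(m, n)) (B : 'M[C]_(n, p)) :
  gauss_mx A -> gauss_mx B -> gauss_mx (A *m B).
Proof.
move=> gA gB i j; rewrite mxE.
by apply: (big_ind (@gauss_int R) gauss_int0 gauss_intD) => k _; apply: gauss_intM.
Qed.

Lemma gauss_ctrmx m n (A : 'M[C]_(m, n)) : gauss_mx A -> gauss_mx (ctrmx A).
Proof. by move=> gA i j; rewrite !mxE; apply: gauss_intJ. Qed.

Lemma gauss_delta_mx m n i j : gauss_mx (delta_mx i j : 'M[C]_(m, n)).
Proof. by move=> a b; rewrite mxE; case: (_ && _); [exists 1, 0 | exists 0, 0]. Qed.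

Lemma ctrmxM m n p (A : 'M[C]_(m, n)) (B : 'M[C]_(n, p)) :
  ctrmx (A *m B) = ctrmx B *m ctrmx A.
Proof. by rewrite /ctrmx map_mxM trmx_mul. Qed.

Lemma ctrmxK m n (A : 'M[C]_(m, n)) : ctrmx (ctrmx A) = A.
Proof. by apply/matrixP => i j; rewrite !mxE conjcK. Qed.

Lemma ctrmxV n (A : 'M[C]_n) : ctrmx (invmx A) = invmx (ctrmx A).
Proof. by rewrite /ctrmx map_invmx trmx_inv. Qed.

Lemma ctrmx_unit n (A : 'M[C]_n) : (ctrmx A \in unitmx) = (A \in unitmx).
Proof. by rewrite /ctrmx unitmx_tr map_unitmx. Qed.

Lemma ctrmx_mulmx_entry m n (A : 'M[C]_(m, n)) (y : 'cV[C]_m) k :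
  (ctrmx A *m y) k 0 = cdot y (col k A).
Proof. by rewrite mxE; apply: eq_bigr => i _; rewrite !mxE mulrC. Qed.

Lemma gram_unitmx m n (H : 'M[C]_(m, n)) : \rank H = n -> ctrmx H *m H \in unitmx.
Proof.
move=> rkH; rewrite -row_free_unit; apply: inj_row_free => v vG0.
have Hv0 : H *m ctrmx v = 0.
  apply: cdotii_eq0; rewrite -{2}(col_id 0 (H *m _)) -ctrmx_mulmx_entry.
  by rewrite ctrmxM ctrmxK mulmxA -(mulmxA v) vG0 !mul0mx mxE.
have : (ctrmx v)^T *m H^T == 0 by rewrite -trmx_mul Hv0 trmx0.
rewrite mulmx_free_eq0 ?/row_free ?mxrank_tr ?rkH // => /eqP vT0.
by rewrite -[v]ctrmxK -[ctrmx v]trmxK vT0 trmx0 /ctrmx map_mx0 trmx0.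
Qed.

(** * Gram-Schmidt orthogonalization *)

Lemma gs_auxE n (bs acc : seq 'cV[C]_n) :
  [/\ size (gs_aux bs acc) = (size acc + size bs)%N,
      forall j, (j < size acc)%N -> (gs_aux bs acc)`_j = acc`_j &
      forall k, (k < size bs)%N -> (gs_aux bs acc)`_(size acc + k) =
         bs`_k - \sum_(j < size acc + k) gs_coef bs`_k (gs_aux bs acc)`_j *: (gs_aux bs acc)`_j].
Proof.
elim: bs acc => [|b bs IH] acc /=; first by split=> //; rewrite addn0.
set v := b - _; have [size_aux nth_acc nth_bs] := IH (rcons acc v).
have size_acc : size (rcons acc v) = (size acc).+1 by rewrite size_rcons.
have {}nth_acc j : (j <= size acc)%N -> (gs_aux bs (rcons acc v))`_j = (rcons acc v)`_j.
  by move=> le_j; rewrite nth_acc // size_acc ltnS.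
split.
- by rewrite size_aux size_acc addSnnS.
- by move=> j lt_j; rewrite nth_acc 1?ltnW // nth_rcons lt_j.
case=> [|k] lt_k; last by rewrite -addSnnS -size_acc nth_bs.
rewrite addn0 nth_acc // nth_rcons ltnn eqxx; congr (_ - _).
by apply: eq_bigr => j _; rewrite nth_acc 1?ltnW // nth_rcons ltn_ord.
Qed.

Lemma size_cols N M (B : 'M[C]_(N, M)) : size (cols B) = M.
Proof. by rewrite size_map size_enum_ord. Qed.

Lemma nth_cols N M (B : 'M[C]_(N, M)) (j : 'I_M) : (cols B)`_j = col j B.
Proof. by rewrite (nth_map j) ?size_enum_ord // nth_ord_enum. Qed.

Lemma cols_gs_vec N M (B : 'M[C]_(N, M)) k : (k < M)%N ->
  (cols B)`_k = gs_vec B k + \sum_(j < k) gs_mu B k j *: gs_vec B j.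
Proof.
move=> lt_kM; have [_ _ nth_bs] := gs_auxE (cols B) [::].
by rewrite /gs_vec /gso -[k]add0n nth_bs ?size_cols // subrK.
Qed.

Lemma gs_vecE N M (B : 'M[C]_(N, M)) k : (k < M)%N ->
  gs_vec B k = (cols B)`_k - \sum_(j < k) gs_mu B k j *: gs_vec B j.
Proof. by move=> lt_kM; rewrite cols_gs_vec // addrK. Qed.

Lemma gs_vec_orth N M (B : 'M[C]_(N, M)) k j : (j < k < M)%N ->
  cdot (gs_vec B k) (gs_vec B j) = 0.
Proof.
elim/ltn_ind: k j => k IH j /andP[lt_jk lt_kM].
rewrite gs_vecE // cdotBl cdot_suml (bigD1 (Ordinal lt_jk)) //= big1; last first.
  move=> i; rewrite -val_eqE /= cdotZl => ne_ij.
  have lt_iM : (i < M)%N := ltn_trans (ltn_ord i) lt_kM.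
  suff -> : cdot (gs_vec B i) (gs_vec B j) = 0 by rewrite mulr0.
  case: (ltngtP i j) ne_ij => // [lt_ij | lt_ji] _.
    by rewrite cdotC (IH j) ?lt_ij ?(ltn_trans lt_jk lt_kM) //; apply/eqP; rewrite conjc_eq0.
  by rewrite (IH i) ?lt_ji.
rewrite addr0 cdotZl /gs_mu /gs_coef.
(* If b*_j = 0, its Gram-Schmidt coefficients are x / 0 = 0. *)
have [/cdotii_eq0 -> | nz_j] := eqVneq (cdot (gs_vec B j) (gs_vec B j)) 0.
  by rewrite !cdot0r mulr0 subr0.
by rewrite divfK // subrr.
Qed.

Section DualVector.
Variables (N m : nat) (B : 'M[C]_(N, m.+1)).
Local Notation g := (gs_vec B).

Definition in_gs_span (v : 'cV[C]_N) : Prop := exists a : nat -> C, v = \sum_(i < m.+1) a i *: g i.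

Lemma in_gs_spanD u v : in_gs_span u -> in_gs_span v -> in_gs_span (u + v).
Proof.
move=> [a ->] [a' ->]; exists (fun i => a i + a' i).
by rewrite -big_split; apply: eq_bigr => i _; rewrite scalerDl.
Qed.

Lemma in_gs_spanZ c v : in_gs_span v -> in_gs_span (c *: v).
Proof.
move=> [a ->]; exists (fun i => c * a i).
by rewrite scaler_sumr; apply: eq_bigr => i _; rewrite scalerA.
Qed.

Lemma in_gs_span_sum (I : finType) (P : pred I) F :
  (forall i, P i -> in_gs_span (F i)) -> in_gs_span (\sum_(i | P i) F i).
Proof.
apply: big_ind => //; last exact: in_gs_spanD.
by exists (fun=> 0); rewrite big1 // => i _; rewrite scale0r.
Qed.

Lemma in_gs_span_gs_vec k : (k < m.+1)%N -> in_gs_span (g k).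
Proof.
move=> lt_km; exists (fun i => (i == k)%:R).
rewrite (bigD1 (Ordinal lt_km)) //= eqxx scale1r big1 ?addr0 // => i.
by rewrite -val_eqE /= => /negbTE->; rewrite scale0r.
Qed.

Lemma in_gs_span_mulmx (a : 'cV[C]_m.+1) : in_gs_span (B *m a).
Proof.
have -> : B *m a = \sum_k a k 0 *: col k B.
  apply/matrixP => i j; rewrite ord1 !mxE summxE.
  by apply: eq_bigr => k _; rewrite !mxE mulrC.
apply: in_gs_span_sum => k _; apply: in_gs_spanZ.
rewrite -nth_cols cols_gs_vec //; apply: in_gs_spanD; first exact: in_gs_span_gs_vec.
apply: in_gs_span_sum => j _; apply/in_gs_spanZ/in_gs_span_gs_vec.
exact: ltn_trans (ltn_ord j) (ltn_ord k).
Qed.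

Lemma gs_last_dual_sqnorm (a : 'cV[C]_m.+1) :
  (forall j, (j < m.+1)%N -> cdot (B *m a) (cols B)`_j = (j == m)%:R) ->
  sqnorm (g m) * sqnorm (B *m a) = 1.
Proof.
set d := B *m a => dual.
have d_gs j : (j < m)%N -> cdot d (g j) = 0.
  elim/ltn_ind: j => j IH lt_jm.
  rewrite gs_vecE ?ltnS 1?ltnW // cdotBr dual ?ltnS 1?ltnW // ltn_eqF //.
  rewrite cdot_sumr big1 ?subr0 // => i _.
  by rewrite cdotZr IH ?mulr0 // (ltn_trans _ lt_jm).
have d_last : cdot d (g m) = 1.
  rewrite gs_vecE // cdotBr dual // eqxx cdot_sumr big1 ?subr0 // => i _.
  by rewrite cdotZr d_gs ?mulr0.
have [c defd] : in_gs_span d := in_gs_span_mulmx a.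
have dd : cdot d d = (c m)^*%C.
  rewrite {2}defd cdot_sumr big_ord_recr /= big1 ?add0r; first by rewrite cdotZr d_last mulr1.
  by move=> i _; rewrite cdotZr d_gs ?mulr0.
have gd : cdot (g m) d = (c m)^*%C * cdot (g m) (g m).
  rewrite {1}defd cdot_sumr big_ord_recr /= big1 ?add0r ?cdotZr // => i _.
  by rewrite cdotZr gs_vec_orth ?mulr0 // ltn_ord /=.
have : cdot (g m) (g m) * cdot d d = 1 by rewrite dd mulrC -gd cdotC d_last conjc1.
by rewrite !cdotii -rmorphM /= => -[].
Qed.

End DualVector.

(** * Consequences of LLL reduction *)

Lemma gs_sqnorm_le_succ N m (B : 'M[C]_(N, m.+1)) k : LLL_reduced B -> (0 < k <= m)%N ->
  sqnorm (gs_vec B k.-1) <= 4 * sqnorm (gs_vec B k).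
Proof.
case: k => // k [size_red lovasz] /= le_km.
have sqr_le (x : R) : `|x| <= 1/2 -> x ^+ 2 <= 1/4.
  by rewrite -real_normK ?num_real // => le_x; have := normr_ge0 x; nra.
have [|/sqr_le re_mu /sqr_le im_mu] := size_red k.+1 k; first by rewrite ltnSn.
have := lovasz k.+1 le_km; have := sqnorm_ge0 (gs_vec B k); rewrite /csq /=.
set mu := gs_mu _ _ _; set a := sqnorm _ => a_ge0 lov.
have : 0 <= (1/2 - (complex.Re mu ^+ 2 + complex.Im mu ^+ 2)) * a by rewrite mulr_ge0 //; lra.
lra.
Qed.

Lemma gs_sqnorm_le_last N m (B : 'M[C]_(N, m.+1)) j : LLL_reduced B -> (j <= m)%N ->
  sqnorm (gs_vec B j) <= 4 ^+ (m - j) * sqnorm (gs_vec B m).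
Proof.
move=> lll; suff le_last t i : (i + t)%N = m ->
    sqnorm (gs_vec B i) <= 4 ^+ t * sqnorm (gs_vec B m).
  by move=> le_jm; apply: le_last; rewrite subnKC.
elim: t i => [|t IH] i def_m; first by rewrite addn0 in def_m; rewrite def_m expr0 mul1r.
apply: le_trans (gs_sqnorm_le_succ (k := i.+1) lll _) _.
  by rewrite -def_m addnS !ltnS leq_addr.
by rewrite exprS -mulrA ler_pM2l // IH // addSnnS.
Qed.

(** * Bounds on real and imaginary parts *)

Definition boxed (r : R) (z : C) : Prop := `|complex.Re z| <= r /\ `|complex.Im z| <= r.

Lemma boxedW r r' z : r <= r' -> boxed r z -> boxed r' z.
Proof. by move=> le_r [re_le im_le]; split; apply: le_trans le_r. Qed.

Lemma boxedD r r' x y : boxed r x -> boxed r' y -> boxed (r + r') (x + y).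
Proof.
by move=> [rex imx] [rey imy]; split; rewrite raddfD;
  apply: le_trans (ler_normD _ _) (lerD _ _).
Qed.

Lemma boxed_sum (I : finType) (P : pred I) (r : I -> R) (F : I -> C) :
  (forall i, P i -> boxed (r i) (F i)) -> boxed (\sum_(i | P i) r i) (\sum_(i | P i) F i).
Proof.
move=> boxF; split; rewrite raddf_sum; apply: le_trans (ler_norm_sum _ _ _) _;
  by apply: ler_sum => i /boxF [].
Qed.

Lemma boxed_conjM r mu z : boxed (1/2) mu -> boxed r z -> boxed r (mu^*%C * z).
Proof.
case: mu z => p q [a b] [/= p_le q_le] [/= a_le b_le].
have r_ge0 : 0 <= r := le_trans (normr_ge0 a) a_le.
have half_le x y : `|x| <= 1/2 -> `|y| <= r -> `|x * y| <= 1/2 * r.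
  by move=> x_le y_le; rewrite normrM ler_pM.
split=> /=; rewrite ?mulNr ?opprK; apply: le_trans (ler_normD _ _) _; rewrite ?normrN;
  by have := half_le _ _ p_le a_le; have := half_le _ _ p_le b_le;
     have := half_le _ _ q_le a_le; have := half_le _ _ q_le b_le; lra.
Qed.

Lemma boxed_cdot_cols N m (B : 'M[C]_(N, m.+1)) (w : 'cV[C]_N) (r : R) :
  LLL_reduced B -> (forall j, (j <= m)%N -> boxed r (cdot w (gs_vec B j))) ->
  forall k, (k <= m)%N -> boxed (k.+1%:R * r) (cdot w (cols B)`_k).
Proof.
move=> [size_red _] box_gs k le_km.
have -> : k.+1%:R * r = r + \sum_(j < k) r.
  by rewrite sumr_const card_ord mulr_natl mulrS.
rewrite cols_gs_vec // cdotDr cdot_sumr; apply: boxedD; first exact: box_gs.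
apply: boxed_sum => j _.
rewrite cdotZr; apply: boxed_conjM; first by apply: size_red; rewrite ltn_ord.
by apply: box_gs; rewrite ltnW // (leq_trans (ltn_ord j)).
Qed.

Lemma dot2_AGM_le (s a b c e : R) : 0 < s ->
  `|a * b + c * e| <= (s * (a ^+ 2 + c ^+ 2) + (b ^+ 2 + e ^+ 2) / s) / 2.
Proof.
move=> s_gt0; set t := s^-1; have st : s * t = 1 by rewrite mulfV ?gt_eqF.
have sq_ge0 (u v : R) :
    0 <= s * (a ^+ 2 + c ^+ 2) - 2 * (a * u + c * v) + (u ^+ 2 + v ^+ 2) * t.
  have : 0 <= t * ((s * a - u) ^+ 2 + (s * c - v) ^+ 2).
    by rewrite mulr_ge0 ?addr_ge0 ?sqr_ge0 ?invr_ge0 ?ltW.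
  have -> : t * ((s * a - u) ^+ 2 + (s * c - v) ^+ 2) = (s * t) * (s * (a ^+ 2 + c ^+ 2))
      - 2 * (s * t) * (a * u + c * v) + (u ^+ 2 + v ^+ 2) * t by ring.
  by rewrite st !mul1r mulr1.
have := sq_ge0 b e; have := sq_ge0 (- b) (- e); rewrite !sqrrN ler_norml.
by move=> *; apply/andP; split; lra.
Qed.

Lemma boxed_cdot_AGM n (s : R) (w v : 'cV[C]_n) : 0 < s ->
  boxed ((s * sqnorm w + sqnorm v / s) / 2) (cdot w v).
Proof.
move=> s_gt0; rewrite /sqnorm mulr_sumr mulr_suml -big_split mulr_suml /=.
apply: boxed_sum => i _; case: (w i 0) (v i 0) => [a c] [b e]; split => /=.
  by rewrite mulrN opprK; apply: dot2_AGM_le.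
rewrite mulrN -mulNr (addrC (- a * e)) (addrC (a ^+ 2)) -(sqrrN a).
exact: dot2_AGM_le.
Qed.

Lemma boxed_cdot n (r : R) (w v : 'cV[C]_n) : 0 < r ->
  sqnorm w * sqnorm v <= r ^+ 2 -> boxed r (cdot w v).
Proof.
move=> r_gt0 wv_le; have [w0 | w_neq0] := eqVneq (sqnorm w) 0.
  by rewrite (sqnorm_eq0 w0) cdot0l; split; rewrite normr0 ltW.
have w_gt0 : 0 < sqnorm w by rewrite lt_def w_neq0 sqnorm_ge0.
(* With the weight s = r / ||w||^2 both terms of the AM-GM bound are at most r. *)
have [re_le im_le] := boxed_cdot_AGM w v (divr_gt0 r_gt0 w_gt0).
suff bound_le : (r / sqnorm w * sqnorm w + sqnorm v / (r / sqnorm w)) / 2 <= r.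
  by split; [exact: le_trans re_le _ | exact: le_trans im_le _].
rewrite divfK // invf_div mulrA.
have : sqnorm v * sqnorm w / r <= r by rewrite ler_pdivrMr // -expr2 mulrC.
lra.
Qed.

(** * Rounding to Gaussian integers *)

Lemma sqr_le_sqr_add_int (x : R) (a : int) : `|x| < 1/2 ->
  x ^+ 2 <= (x + a%:~R) ^+ 2 ?= iff (a == 0).
Proof.
rewrite ltr_norml => /andP[lo hi]; apply/leifP.
case: (ltrgt0P a) => [a_gt0 | a_lt0 | ->]; last by rewrite addr0.
- have : (1 : R) <= a%:~R by rewrite ler1z -gtz0_ge1.
  set y := a%:~R => y_ge1.
  have : 0 < y * (2 * x + y) by apply: mulr_gt0; lra.
  nra.
- have : (a%:~R : R) <= -1 by rewrite -lerN2 opprK -intrN ler1z -gtz0_ge1 oppr_gt0.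
  set y := a%:~R => y_le1.
  have : 0 < (- y) * (- (2 * x + y)) by apply: mulr_gt0; lra.
  nra.
Qed.

Lemma csq_le_csq_add_gauss (r : R) (e t : C) : r < 1/2 -> boxed r e -> gauss_int t ->
  csq e <= csq (e + t) ?= iff (t == 0).
Proof.
move=> lt_r [re_le im_le] [a [b ->]]; rewrite eq_complex /= !intr_eq0.
case: e re_le im_le => p q /= re_le im_le.
by apply: leifD; apply: sqr_le_sqr_add_int; apply: le_lt_trans lt_r.
Qed.

Lemma closest_gauss_add_boxed M (r : R) (x e t : 'cV[C]_M) : r < 1/2 ->
  gauss_mx x -> (forall k, boxed r (e k 0)) -> closest_gauss (x + e) t -> t = x.
Proof.
move=> lt_r gx box_e [gt closest].
have: sqnorm (e + (x - t)) <= sqnorm e.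
  have := closest x gx; rewrite /vnorm ler_sqrt ?sqnorm_ge0 //.
  by rewrite [x + e - x]addrC addKr (addrCA e) addrA.
have /ge_leif -> : sqnorm e <= sqnorm (e + (x - t)) ?= iff [forall k, (x - t) k 0 == 0].
  apply: leif_sum => k _; rewrite mxE.
  apply: csq_le_csq_add_gauss (box_e k) _ => //; rewrite !mxE.
  exact: gauss_intD (gx k 0) (gauss_intN (gt k 0)).
move=> /forallP xt0; apply/esym/eqP; rewrite -subr_eq0; apply/eqP/matrixP => k j.
by rewrite ord1 [RHS]mxE; apply/eqP/xt0.
Qed.

Lemma dual_basis_ctrmx_mulmx N M (H : 'M[C]_(N, M)) (U : 'M[C]_M) : \rank H = M ->
  ctrmx (H *m invmx (ctrmx H *m H) *m U) *m H = ctrmx U.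
Proof.
move=> rkH; rewrite !ctrmxM ctrmxV ctrmxM ctrmxK -!mulmxA.
by rewrite mulVmx ?mulmx1 ?gram_unitmx.
Qed.

Lemma gs_last_sqnorm_min_dist N m (H : 'M[C]_(N, m.+1)) (d : R) (U : 'M[C]_m.+1) :
  \rank H = m.+1 -> is_min_dist H d -> unimodular U ->
  sqnorm (gs_vec (H *m invmx (ctrmx H *m H) *m U) m) * d ^+ 2 <= 1.
Proof.
move=> rkH [[? [_ [_ def_d]]] d_min] [_ [U_unit gUi]].
set B := H *m _ *m U; pose z := invmx (ctrmx U) *m (delta_mx ord_max 0 : 'cV[C]_m.+1).
have Uz : ctrmx U *m z = delta_mx ord_max 0 by rewrite mulmxA mulmxV ?ctrmx_unit ?mul1mx.
have gz : gauss_mx z by rewrite /z -ctrmxV; apply/gauss_mxM/gauss_delta_mx/gauss_ctrmx.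
have z_neq0 : z != 0.
  apply/eqP => z_eq0; move: Uz; rewrite z_eq0 mulmx0 => /matrixP/(_ ord_max 0)/eqP.
  by rewrite !mxE !eqxx eq_sym oner_eq0.
have Bz : B *m (invmx U *m (ctrmx H *m H) *m z) = H *m z.
  by rewrite /B !mulmxA mulmxK // -(mulmxA _ (ctrmx H)) mulmxKV ?gram_unitmx.
have dual j : (j < m.+1)%N -> cdot (B *m (invmx U *m (ctrmx H *m H) *m z)) (cols B)`_j = (j == m)%:R.
  move=> lt_jm; rewrite Bz (nth_cols B (Ordinal lt_jm)) -ctrmx_mulmx_entry mulmxA.
  by rewrite dual_basis_ctrmx_mulmx // Uz mxE /= andbT.
rewrite -(gs_last_dual_sqnorm dual) Bz ler_wpM2l ?sqnorm_ge0 // -sqr_vnorm.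
rewrite ler_sqr ?nnegrE ?sqrtr_ge0 ?d_min //.
by rewrite -def_d sqrtr_ge0.
Qed.

Lemma gs_sqnorm_min_dist_le N m (H : 'M[C]_(N, m.+1)) (d : R) (U : 'M[C]_m.+1) :
  \rank H = m.+1 -> is_min_dist H d -> unimodular U ->
  LLL_reduced (H *m invmx (ctrmx H *m H) *m U) ->
  forall j, (j <= m)%N -> sqnorm (gs_vec (H *m invmx (ctrmx H *m H) *m U) j) * d ^+ 2 <= 4 ^+ m.
Proof.
move=> rkH dH hU lll j le_jm; have last := gs_last_sqnorm_min_dist rkH dH hU.
apply: le_trans (ler_wpM2r (sqr_ge0 d) (gs_sqnorm_le_last lll le_jm)) _.
rewrite -mulrA; apply: le_trans (ler_wpM2l (exprn_ge0 _ (ler0n _ 4)) last) _.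
by rewrite mulr1; apply: ler_weXn2l; rewrite ?ler1n ?leq_subr.
Qed.

Lemma boxed_ctrmx_mulmx_noise N m (B : 'M[C]_(N, m.+1)) (w : 'cV[C]_N) (d : R) :
  LLL_reduced B -> (forall j, (j <= m)%N -> sqnorm (gs_vec B j) * d ^+ 2 <= 4 ^+ m) ->
  vnorm w < (4 * m.+1%:R)^-1 / 2 ^+ m * d -> forall k, boxed (1/4) ((ctrmx B *m w) k 0).
Proof.
set E := (4 * m.+1%:R)^-1; set c := E / 2 ^+ m => lll gs_d w_lt k.
have E_gt0 : 0 < E by rewrite invr_gt0 mulr_gt0 ?ltr0n.
have w_le : sqnorm w <= (c * d) ^+ 2.
  rewrite -sqr_vnorm ler_sqr ?nnegrE ?sqrtr_ge0 ?(ltW w_lt) //.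
  exact: le_trans (sqrtr_ge0 _) (ltW w_lt).
have box_gs j : (j <= m)%N -> boxed E (cdot w (gs_vec B j)).
  move=> le_jm; apply: boxed_cdot => //.
  apply: le_trans (ler_wpM2r (sqnorm_ge0 _) w_le) _.
  have -> : (c * d) ^+ 2 * sqnorm (gs_vec B j) = c ^+ 2 * (sqnorm (gs_vec B j) * d ^+ 2).
    by ring.
  apply: le_trans (ler_wpM2l (sqr_ge0 c) (gs_d j le_jm)) _.
  have four : (2 : R) ^+ 2 = 4 by rewrite expr2 -natrM.
  rewrite /c expr_div_n -exprM mulnC exprM four -mulrA mulVf ?expf_neq0 ?pnatr_eq0 //.
  by rewrite mulr1 lexx.
rewrite ctrmx_mulmx_entry -nth_cols; apply: boxedW (boxed_cdot_cols lll box_gs (ltn_ord k)).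
have ME : m.+1%:R * E = 1/4 by rewrite /E; field; rewrite -mulrS pnatr_eq0.
by rewrite -ME ler_pM2r // ler_nat ltn_ord.
Qed.

End LLLDecoding.

Theorem lemma3 (R : realType) (M : nat) (hM : (1 <= M)%N) :
  exists c : R, 0 < c /\
  forall (N : nat) (H : 'M[R[i]]_(N, M)), (M <= N)%N -> \rank H = M ->
  forall (d : R), is_min_dist H d ->
  forall (U : 'M[R[i]]_M) (B : 'M[R[i]]_(N, M)),
    unimodular U ->
    B = (H *m invmx (ctrmx H *m H)) *m U ->
    LLL_reduced B ->
  forall (x : 'cV[R[i]]_M) (w y : 'cV[R[i]]_N),
    gauss_mx x -> y = H *m x + w ->
    vnorm w < c * d ->
  forall xt : 'cV[R[i]]_M, closest_gauss (ctrmx B *m y) xt ->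
    invmx (ctrmx U) *m xt = x.
Proof.
case: M hM => // m _.
exists ((4 * m.+1%:R)^-1 / 2 ^+ m); split.
  by rewrite divr_gt0 ?exprn_gt0 ?invr_gt0 ?mulr_gt0 ?ltr0n.
move=> N H _ rkH d dH U B hU defB lll x w y gx -> w_lt xt closest.
have gs_d := gs_sqnorm_min_dist_le rkH dH hU; rewrite -defB in gs_d.
have noise := boxed_ctrmx_mulmx_noise lll (gs_d lll) w_lt.
have [gU [U_unit _]] := hU.
have UH_unit : ctrmx U \in unitmx by rewrite ctrmx_unit.
have gUx : gauss_mx (ctrmx U *m x) by apply/gauss_mxM/gx/gauss_ctrmx.
have quarter_lt : 1/4 < 1/2 :> R by lra.
have BH : ctrmx B *m H = ctrmx U by rewrite defB dual_basis_ctrmx_mulmx.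
rewrite mulmxDr mulmxA BH in closest.
by rewrite (closest_gauss_add_boxed quarter_lt gUx noise closest) (mulKmx UH_unit).
Qed.
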